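(* Let $\mathcal M$ be a multi-ideal. Suppose there are a positive integer $n$ and Banach spaces $E_1,\ldots,E_n,F$ with two properties. First, $\mathcal{M}(E_1,\ldots,E_n,F;\mathbb{K})=\mathcal{L}(E_1,\ldots,E_n,F;\mathbb{K})$. Second, $\mathcal{M}(E_1,\ldots,E_n;F')\neq\mathcal{L}(E_1,\ldots,E_n;F')$. Then no smooth tensor norm represents $\mathcal M$.
   Context: All spaces are over a fixed field $\mathbb{K}=\mathbb{R}$ or $\mathbb{C}$. $\mathcal{L}(E_1,\ldots,E_n;F)$ is the space of continuous $n$-linear maps with the sup norm, and $E'$ is the dual of $E$. A tensor norm is a sequence $\beta=(\beta_n)_{n\ge1}$ where each $\beta_n$ assigns to every $n$-tuple of normed spaces a reasonable crossnorm on $E_1\otimes\cdots\otimes E_n$ with the metric mapping property. $\beta$ is smooth if for every $n$ and all normed $E_1,\ldots,E_n$ the map $\psi\colon(E_1\otimes\cdots\otimes E_n\otimes\mathbb{K},\beta_{n+1})\to(E_1\otimes\cdots\otimes E_n,\beta_n)$, $\psi(x_1\otimes\cdots\otimes x_n\otimes\lambda)=\lambda(x_1\otimes\cdots\otimes x_n)$, is an isometric isomorphism. A multi-ideal $\mathcal M$ assigns to all Banach spaces $E_1,\ldots,E_n,F$ a linear subspace $\mathcal M(E_1,\ldots,E_n;F)\subseteq\mathcal{L}(E_1,\ldots,E_n;F)$ that contains the finite-type maps. It is closed under composition with bounded linear operators on both sides. It carries a complete norm $\|\cdot\|_{\mathcal M}$ satisfying $\|(\lambda_1,\ldots,\lambda_n)\mapsto\lambda_1\cdots\lambda_n\|_{\mathcal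 M}=1$ and $\|t\circ A\circ(u_1,\ldots,u_n)\|_{\mathcal M}\le\|t\|\|A\|_{\mathcal M}\prod\|u_j\|$. $\mathcal M$ is represented by $\beta$ if for every $n$ and all Banach spaces $E_1,\ldots,E_n,F$ the canonical map $\varphi\colon\mathcal{M}(E_1,\ldots,E_n;F')\to(E_1\otimes\cdots\otimes E_n\otimes F,\beta_{n+1})'$, $\varphi(T)(x_1\otimes\cdots\otimes x_n\otimes y)=T(x_1,\ldots,x_n)(y)$, is an isometric isomorphism onto. *)

From Stdlib Require Import Reals Lra Psatz List ClassicalEpsilon.
Import ListNotations.
Open Scope R_scope.

Inductive scalar_field : Type := RealField | ComplexField.

Definition K (k : scalar_field) : Type :=
  match k with RealField => R | ComplexField => prod R R end.

Definition Kzero (k : scalar_field) : K k :=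
  match k return K k with RealField => 0 | ComplexField => (0, 0) end.
Definition Kone (k : scalar_field) : K k :=
  match k return K k with RealField => 1 | ComplexField => (1, 0) end.
Definition Kadd {k : scalar_field} : K k -> K k -> K k :=
  match k return K k -> K k -> K k with
  | RealField => Rplus
  | ComplexField => fun a b => (fst a + fst b, snd a + snd b) end.
Definition Kopp {k : scalar_field} : K k -> K k :=
  match k return K k -> K k with
  | RealField => Ropp
  | ComplexField => fun a => (- fst a, - snd a) end.
Definition Kmul {k : scalar_field} : K k -> K k -> K k :=
  match k return K k -> K k -> K k with
  | RealField => Rmult
  | ComplexField => fun a b =>
      (fst a * fst b - snd a * snd b, fst a * snd b + snd a * fst b) end.
Definition Kabs {k : scalar_field} : K k -> R :=
  match k return K k -> R with
  | RealField => Rabs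
  | ComplexField => fun a => sqrt (fst a * fst a + snd a * snd a) end.

Lemma Kid_add k (a p q r s : K k) :
  Kadd (Kadd (Kmul a p) q) (Kadd (Kmul a r) s) = Kadd (Kmul a (Kadd p r)) (Kadd q s).
Proof.
  destruct k; simpl in *; [ring|].
  destruct a, p, q, r, s; simpl; f_equal; ring.
Qed.

Lemma Kid_zero k (a : K k) : Kzero k = Kadd (Kmul a (Kzero k)) (Kzero k).
Proof. destruct k; simpl in *; [ring|]. destruct a; simpl; f_equal; ring. Qed.

Lemma Kid_opp k (a p q : K k) : Kopp (Kadd (Kmul a p) q) = Kadd (Kmul a (Kopp p)) (Kopp q).
Proof. destruct k; simpl in *; [ring|]. destruct a, p, q; simpl; f_equal; ring. Qed.

Lemma Kid_scal k (c a p q : K k) :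
  Kmul c (Kadd (Kmul a p) q) = Kadd (Kmul a (Kmul c p)) (Kmul c q).
Proof. destruct k; simpl in *; [ring|]. destruct c, a, p, q; simpl; f_equal; ring. Qed.

Lemma Kabs_zero k : Kabs (Kzero k) = 0.
Proof.
  destruct k; simpl; [apply Rabs_R0|].
  replace (0 * 0 + 0 * 0) with 0 by ring. apply sqrt_0.
Qed.

Lemma Kabs_nonneg k (a : K k) : 0 <= Kabs a.
Proof. destruct k; simpl; [apply Rabs_pos | apply sqrt_pos]. Qed.

Lemma Kabs_opp k (a : K k) : Kabs (Kopp a) = Kabs a.
Proof.
  destruct k; simpl in *; [apply Rabs_Ropp|].
  destruct a; simpl; f_equal; ring.
Qed.

Lemma Kabs_mul k (a b : K k) : Kabs (Kmul a b) = Kabs a * Kabs b.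
Proof.
  destruct k; simpl in *; [apply Rabs_mult|].
  destruct a as [a1 a2], b as [b1 b2]; simpl.
  rewrite <- sqrt_mult_alt by nra. f_equal; ring.
Qed.

Lemma Kabs_triangle k (a b : K k) : Kabs (Kadd a b) <= Kabs a + Kabs b.
Proof.
  destruct k; simpl in *; [apply Rabs_triang|].
  destruct a as [a c], b as [b d]; simpl.
  set (p := sqrt (a * a + c * c)). set (q := sqrt (b * b + d * d)).
  assert (Hp : 0 <= p) by apply sqrt_pos. assert (Hq : 0 <= q) by apply sqrt_pos.
  assert (Hp2 : p * p = a * a + c * c) by (apply sqrt_sqrt; nra).
  assert (Hq2 : q * q = b * b + d * d) by (apply sqrt_sqrt; nra).
  assert (Hpq : a * b + c * d <= p * q).
  { assert (H : (p * q) * (p * q) - (a * b + c * d) * (a * b + c * d)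
                = (a * d - c * b) * (a * d - c * b)).
    { replace ((p * q) * (p * q)) with ((p * p) * (q * q)) by ring.
      rewrite Hp2, Hq2. ring. }
    assert (Hpq0 : 0 <= p * q) by (apply Rmult_le_pos; assumption).
    assert (Hsq : 0 <= (a * d - c * b) * (a * d - c * b)) by apply Rle_0_sqr.
    destruct (Rle_or_lt (a * b + c * d) (p * q)) as [Hle|Hlt]; [exact Hle|].
    exfalso.
    assert (Hm : (p * q) * (p * q) < (a * b + c * d) * (a * b + c * d)).
    { apply Rmult_le_0_lt_compat; assumption. }
    lra. }
  rewrite <- (sqrt_square (p + q)) by lra.
  apply sqrt_le_1_alt. nra.
Qed.

Record NSpace (k : scalar_field) : Type := mkNSpace {
  vec :> Type;
  vzero : vec;
  vadd : vec -> vec -> vec;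
  vopp : vec -> vec;
  vscal : K k -> vec -> vec;
  vnorm : vec -> R }.
Arguments mkNSpace {k}.
Arguments vec {k}.
Arguments vzero {k} _.
Arguments vadd {k _}.
Arguments vopp {k _}.
Arguments vscal {k _}.
Arguments vnorm {k _}.

Definition vsub {k} {E : NSpace k} (u v : E) : E := vadd u (vopp v).

Definition is_normed_space {k} (E : NSpace k) : Prop :=
  (forall u v w : E, vadd u (vadd v w) = vadd (vadd u v) w) /\
  (forall u v : E, vadd u v = vadd v u) /\
  (forall u : E, vadd u (vzero E) = u) /\
  (forall u : E, vadd u (vopp u) = vzero E) /\
  (forall (a b : K k) (u : E), vscal a (vscal b u) = vscal (Kmul a b) u) /\
  (forall u : E, vscal (Kone k) u = u) /\
  (forall (a : K k) (u v : E), vscal a (vadd u v) = vadd (vscal a u) (vscal a v)) /\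
  (forall (a b : K k) (u : E), vscal (Kadd a b) u = vadd (vscal a u) (vscal b u)) /\
  (forall u : E, 0 <= vnorm u) /\
  (forall u : E, vnorm u = 0 -> u = vzero E) /\
  (forall (a : K k) (u : E), vnorm (vscal a u) = Kabs a * vnorm u) /\
  (forall u v : E, vnorm (vadd u v) <= vnorm u + vnorm v).

Definition complete {k} (E : NSpace k) : Prop :=
  forall s : nat -> E,
    (forall eps, 0 < eps -> exists N, forall m n, (N <= m)%nat -> (N <= n)%nat ->
        vnorm (vsub (s m) (s n)) < eps) ->
    exists l : E, forall eps, 0 < eps -> exists N, forall n, (N <= n)%nat ->
        vnorm (vsub (s n) l) < eps.

Definition banach {k} (E : NSpace k) : Prop := is_normed_space E /\ complete E.

Definition all_normed {k} (Es : list (NSpace k)) : Prop := Forall is_normed_space Es.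
Definition all_banach {k} (Es : list (NSpace k)) : Prop := Forall banach Es.

(* supremum of a set of reals (meaningful when the set is nonempty and bounded) *)
Definition Rsup (S : R -> Prop) : R := epsilon (inhabits 0) (fun m => is_lub S m).

Definition linear_map {k} {E G : NSpace k} (f : E -> G) : Prop :=
  forall (a : K k) (u v : E), f (vadd (vscal a u) v) = vadd (vscal a (f u)) (f v).

Definition bounded_map {k} {E G : NSpace k} (f : E -> G) : Prop :=
  exists C, forall x : E, vnorm (f x) <= C * vnorm x.

Definition opnorm {k} {E G : NSpace k} (f : E -> G) : R :=
  Rsup (fun r => exists x : E, vnorm x <= 1 /\ r = vnorm (f x)).

Definition Kspace (k : scalar_field) : NSpace k :=
  mkNSpace (K k) (Kzero k) (@Kadd k) (@Kopp k) (@Kmul k) (@Kabs k).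

Definition is_functional {k} {E : NSpace k} (f : E -> K k) : Prop :=
  @linear_map k E (Kspace k) f /\ @bounded_map k E (Kspace k) f.

Definition functional {k} (E : NSpace k) : Type := { f : E -> K k | is_functional f }.

Lemma dzero_ok k (E : NSpace k) : is_functional (fun _ : E => Kzero k).
Proof.
  split.
  - intros a u v; simpl. apply Kid_zero.
  - exists 0; intros x; simpl. rewrite Kabs_zero. lra.
Qed.

Lemma dadd_ok k (E : NSpace k) (f g : functional E) :
  is_functional (fun x : E => Kadd (proj1_sig f x) (proj1_sig g x)).
Proof.
  destruct f as [f [Lf [Cf Bf]]], g as [g [Lg [Cg Bg]]]; simpl. split.
  - intros a u v; simpl in *. rewrite Lf, Lg. apply Kid_add.
  - exists (Cf + Cg); intros x; simpl in *.
    pose proof (Bf x); pose proof (Bg x); pose proof (Kabs_triangle k (f x) (g x)). nra.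
Qed.

Lemma dopp_ok k (E : NSpace k) (f : functional E) :
  is_functional (fun x : E => Kopp (proj1_sig f x)).
Proof.
  destruct f as [f [Lf [Cf Bf]]]; simpl. split.
  - intros a u v; simpl in *. rewrite Lf. apply Kid_opp.
  - exists Cf; intros x; simpl in *. rewrite Kabs_opp. apply Bf.
Qed.

Lemma dscal_ok k (E : NSpace k) (c : K k) (f : functional E) :
  is_functional (fun x : E => Kmul c (proj1_sig f x)).
Proof.
  destruct f as [f [Lf [Cf Bf]]]; simpl. split.
  - intros a u v; simpl in *. rewrite Lf. apply Kid_scal.
  - exists (Kabs c * Cf); intros x; simpl in *. rewrite Kabs_mul.
    pose proof (Bf x). pose proof (Kabs_nonneg k c).
    rewrite Rmult_assoc. apply Rmult_le_compat_l; assumption.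
Qed.

Definition dual {k} (E : NSpace k) : NSpace k :=
  mkNSpace (functional E)
    (exist _ _ (dzero_ok k E))
    (fun f g => exist _ _ (dadd_ok k E f g))
    (fun f => exist _ _ (dopp_ok k E f))
    (fun c f => exist _ _ (dscal_ok k E c f))
    (fun f => Rsup (fun r => exists x : E, vnorm x <= 1 /\ r = Kabs (proj1_sig f x))).

Fixpoint htuple {k} (Es : list (NSpace k)) : Type :=
  match Es with nil => unit | E :: Es' => prod (vec E) (htuple Es') end.

Fixpoint hsplit {k} (Es Gs : list (NSpace k)) : htuple (Es ++ Gs) -> prod (htuple Es) (htuple Gs) :=
  match Es return htuple (Es ++ Gs) -> prod (htuple Es) (htuple Gs) with
  | nil => fun z => (tt, z)
  | E :: Es' => fun z => let p := hsplit Es' Gs (snd z) in ((fst z, fst p), snd p)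
  end.

Fixpoint multilinear {k} (Es : list (NSpace k)) (G : NSpace k) {struct Es} :
    (htuple Es -> G) -> Prop :=
  match Es return (htuple Es -> G) -> Prop with
  | nil => fun _ => True
  | E :: Es' => fun A =>
      (forall t, @linear_map k E G (fun x => A (x, t))) /\
      (forall x : E, multilinear Es' G (fun t => A (x, t)))
  end.

Fixpoint hnorm_prod {k} (Es : list (NSpace k)) : htuple Es -> R :=
  match Es return htuple Es -> R with
  | nil => fun _ => 1
  | E :: Es' => fun z => vnorm (fst z) * hnorm_prod Es' (snd z)
  end.

Fixpoint hball {k} (Es : list (NSpace k)) : htuple Es -> Prop :=
  match Es return htuple Es -> Prop with
  | nil => fun _ => True
  | E :: Es' => fun z => vnorm (fst z) <= 1 /\ hball Es' (snd z)
  end.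

Definition bounded_ml {k} (Es : list (NSpace k)) (G : NSpace k) (A : htuple Es -> G) : Prop :=
  exists C, forall x, vnorm (A x) <= C * hnorm_prod Es x.

Definition cont_multilinear {k} (Es : list (NSpace k)) (G : NSpace k) (A : htuple Es -> G) : Prop :=
  multilinear Es G A /\ bounded_ml Es G A.

Definition mlnorm {k} (Es : list (NSpace k)) (G : NSpace k) (A : htuple Es -> G) : R :=
  Rsup (fun r => exists x, hball Es x /\ r = vnorm (A x)).

Fixpoint hduals {k} (Es : list (NSpace k)) : Type :=
  match Es with nil => unit | E :: Es' => prod (vec (dual E)) (hduals Es') end.

Fixpoint heval {k} (Es : list (NSpace k)) : hduals Es -> htuple Es -> K k :=
  match Es return hduals Es -> htuple Es -> K k with
  | nil => fun _ _ => Kone k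
  | E :: Es' => fun phis z => Kmul (proj1_sig (fst phis) (fst z)) (heval Es' (snd phis) (snd z))
  end.

Fixpoint hdnorm_prod {k} (Es : list (NSpace k)) : hduals Es -> R :=
  match Es return hduals Es -> R with
  | nil => fun _ => 1
  | E :: Es' => fun phis => vnorm (fst phis) * hdnorm_prod Es' (snd phis)
  end.

Fixpoint hmaps {k} (Es0 Es : list (NSpace k)) : Type :=
  match Es0, Es with
  | nil, nil => unit
  | E0 :: Es0', E :: Es' => prod (vec E0 -> vec E) (hmaps Es0' Es')
  | _, _ => Empty_set
  end.

Fixpoint happly {k} (Es0 Es : list (NSpace k)) {struct Es0} :
    hmaps Es0 Es -> htuple Es0 -> htuple Es :=
  match Es0 as l0, Es as l return hmaps l0 l -> htuple l0 -> htuple l with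
  | nil, nil => fun _ _ => tt
  | E0 :: Es0', E :: Es' => fun us z => (fst us (fst z), happly Es0' Es' (snd us) (snd z))
  | nil, _ :: _ => fun us _ => match us return _ with end
  | _ :: _, nil => fun us _ => match us return _ with end
  end.

Fixpoint hmaps_ok {k} (Es0 Es : list (NSpace k)) {struct Es0} : hmaps Es0 Es -> Prop :=
  match Es0 as l0, Es as l return hmaps l0 l -> Prop with
  | nil, nil => fun _ => True
  | E0 :: Es0', E :: Es' => fun us =>
      (linear_map (fst us) /\ bounded_map (fst us)) /\ hmaps_ok Es0' Es' (snd us)
  | nil, _ :: _ => fun _ => False
  | _ :: _, nil => fun _ => False
  end.

Fixpoint hopnorm_prod {k} (Es0 Es : list (NSpace k)) {struct Es0} : hmaps Es0 Es -> R :=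
  match Es0 as l0, Es as l return hmaps l0 l -> R with
  | nil, nil => fun _ => 1
  | E0 :: Es0', E :: Es' => fun us => opnorm (fst us) * hopnorm_prod Es0' Es' (snd us)
  | nil, _ :: _ => fun _ => 0
  | _ :: _, nil => fun _ => 0
  end.

Fixpoint kprod (k : scalar_field) (n : nat) : htuple (repeat (Kspace k) n) -> K k :=
  match n return htuple (repeat (Kspace k) n) -> K k with
  | O => fun _ => Kone k
  | S m => fun z => Kmul (fst z) (kprod k m (snd z))
  end.

Record multi_ideal (k : scalar_field) : Type := MultiIdeal {
  mi_mem : forall (Es : list (NSpace k)) (G : NSpace k), (htuple Es -> G) -> Prop;
  mi_norm : forall (Es : list (NSpace k)) (G : NSpace k), (htuple Es -> G) -> R }.
Arguments mi_mem {k} _ _ _ _.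
Arguments mi_norm {k} _ _ _ _.

Definition is_multi_ideal {k} (M : multi_ideal k) : Prop :=
  (forall (Es : list (NSpace k)) (G : NSpace k),
     Es <> nil -> all_banach Es -> banach G ->
     (forall A, mi_mem M Es G A -> cont_multilinear Es G A) /\
     mi_mem M Es G (fun _ => vzero G) /\
     (forall A B, mi_mem M Es G A -> mi_mem M Es G B ->
        mi_mem M Es G (fun x => vadd (A x) (B x))) /\
     (forall (a : K k) A, mi_mem M Es G A -> mi_mem M Es G (fun x => vscal a (A x))) /\
     (forall (phis : hduals Es) (y : G), mi_mem M Es G (fun x => vscal (heval Es phis x) y)) /\
     (forall A, mi_mem M Es G A -> 0 <= mi_norm M Es G A) /\
     (forall A, mi_mem M Es G A -> mi_norm M Es G A = 0 -> forall x, A x = vzero G) /\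
     (forall (a : K k) A, mi_mem M Es G A ->
        mi_norm M Es G (fun x => vscal a (A x)) = Kabs a * mi_norm M Es G A) /\
     (forall A B, mi_mem M Es G A -> mi_mem M Es G B ->
        mi_norm M Es G (fun x => vadd (A x) (B x)) <= mi_norm M Es G A + mi_norm M Es G B) /\
     (forall s : nat -> (htuple Es -> G),
        (forall n, mi_mem M Es G (s n)) ->
        (forall eps, 0 < eps -> exists N, forall m n, (N <= m)%nat -> (N <= n)%nat ->
            mi_norm M Es G (fun x => vsub (s m x) (s n x)) < eps) ->
        exists A, mi_mem M Es G A /\
          (forall eps, 0 < eps -> exists N, forall n, (N <= n)%nat ->
            mi_norm M Es G (fun x => vsub (s n x) (A x)) < eps))) /\
  (forall (Es0 Es : list (NSpace k)) (G G0 : NSpace k)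
          (us : hmaps Es0 Es) (t : G -> G0) (A : htuple Es -> G),
     Es <> nil -> all_banach Es0 -> all_banach Es -> banach G -> banach G0 ->
     hmaps_ok Es0 Es us -> linear_map t -> bounded_map t ->
     mi_mem M Es G A ->
     mi_mem M Es0 G0 (fun x => t (A (happly Es0 Es us x))) /\
     mi_norm M Es0 G0 (fun x => t (A (happly Es0 Es us x)))
       <= opnorm t * mi_norm M Es G A * hopnorm_prod Es0 Es us) /\
  (forall n : nat, (1 <= n)%nat ->
     mi_norm M (repeat (Kspace k) n) (Kspace k) (kprod k n) = 1).

(* A tensor in E1 (x) ... (x) En is represented by a finite list of      *)
(* elementary tensors; two lists represent the same tensor iff every     *)
(* multilinear form takes the same value on them (universal property).   *)
Definition tsum {k} {Es : list (NSpace k)} (B : htuple Es -> K k) (u : list (htuple Es)) : K k :=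
  fold_right (fun x acc => Kadd (B x) acc) (Kzero k) u.

Definition tensor_eq {k} (Es : list (NSpace k)) (u v : list (htuple Es)) : Prop :=
  forall B : htuple Es -> K k, multilinear Es (Kspace k) B -> tsum B u = tsum B v.

(* beta Es is beta_n on E1 (x) ... (x) En when Es has length n *)
Definition tnorm_family (k : scalar_field) : Type :=
  forall Es : list (NSpace k), list (htuple Es) -> R.

Definition is_tensor_norm {k} (beta : tnorm_family k) : Prop :=
  forall Es : list (NSpace k), Es <> nil -> all_normed Es ->
    (forall u v, tensor_eq Es u v -> beta Es u = beta Es v) /\
    (forall u, 0 <= beta Es u) /\
    (forall u, beta Es u = 0 -> tensor_eq Es u nil) /\
    (forall u v, beta Es (u ++ v) <= beta Es u + beta Es v) /\
    (forall (a : K k) u v,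
       (forall B, multilinear Es (Kspace k) B -> tsum B v = Kmul a (tsum B u)) ->
       beta Es v = Kabs a * beta Es u) /\
    (forall x : htuple Es, beta Es [x] = hnorm_prod Es x) /\
    (forall (phis : hduals Es) u,
       Kabs (tsum (heval Es phis) u) <= hdnorm_prod Es phis * beta Es u) /\
    (forall (Gs : list (NSpace k)) (us : hmaps Es Gs),
       all_normed Gs -> hmaps_ok Es Gs us ->
       forall u, beta Gs (map (happly Es Gs us) u) <= hopnorm_prod Es Gs us * beta Es u).

(* smoothness: psi(x1 (x) ... (x) xn (x) lambda) = lambda (x1 (x) ... (x) xn)
   is isometric: whenever v represents psi(w), beta_n(v) = beta_{n+1}(w) *)
Definition smooth {k} (beta : tnorm_family k) : Prop :=
  forall Es : list (NSpace k), Es <> nil -> all_normed Es ->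
    forall (w : list (htuple (Es ++ [Kspace k]))) (v : list (htuple Es)),
      (forall B : htuple Es -> K k, multilinear Es (Kspace k) B ->
         tsum B v =
         tsum (fun z : htuple (Es ++ [Kspace k]) =>
                 let p := hsplit Es [Kspace k] z in Kmul (fst (snd p)) (B (fst p))) w) ->
      beta Es v = beta (Es ++ [Kspace k]) w.

(* bounded linear functionals on (E1 (x) ... (x) En, beta) = beta-bounded
   multilinear forms, and their dual norm *)
Definition beta_bounded {k} (beta : tnorm_family k) (Es : list (NSpace k))
    (B : htuple Es -> K k) : Prop :=
  exists C, forall u, Kabs (tsum B u) <= C * beta Es u.

Definition beta_dnorm {k} (beta : tnorm_family k) (Es : list (NSpace k))
    (B : htuple Es -> K k) : R :=
  Rsup (fun r => exists u, beta Es u <= 1 /\ r = Kabs (tsum B u)).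

Definition phiT {k} (Es : list (NSpace k)) (F : NSpace k) (T : htuple Es -> dual F)
    : htuple (Es ++ [F]) -> K k :=
  fun z => let p := hsplit Es [F] z in proj1_sig (T (fst p)) (fst (snd p)).

Definition represents {k} (M : multi_ideal k) (beta : tnorm_family k) : Prop :=
  forall (Es : list (NSpace k)) (F : NSpace k),
    Es <> nil -> all_banach Es -> banach F ->
    (forall T : htuple Es -> dual F, mi_mem M Es (dual F) T ->
       beta_bounded beta (Es ++ [F]) (phiT Es F T) /\
       beta_dnorm beta (Es ++ [F]) (phiT Es F T) = mi_norm M Es (dual F) T) /\
    (forall B : htuple (Es ++ [F]) -> K k,
       multilinear (Es ++ [F]) (Kspace k) B -> beta_bounded beta (Es ++ [F]) B ->
       exists T, mi_mem M Es (dual F) T /\ forall z, phiT Es F T z = B z).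

(* If a smooth tensor norm beta represents M, every form A in M(G_1,...,G_m;K) is
   beta-continuous on G_1 (x) ... (x) G_m: composing A with K ~ K' puts it in
   M(G_1,...,G_m;K'), the representation turns that into a beta-continuous form on
   G_1 (x) ... (x) G_m (x) K, and smoothness identifies that space with
   G_1 (x) ... (x) G_m.  For G = (E_1,...,E_n,F), where M agrees with L, every
   T in L(E_1,...,E_n;F') thus gives a beta-continuous form on E_1 (x) ... (x) E_n (x) F,
   and surjectivity of the representation puts T in M(E_1,...,E_n;F'). *)
From Stdlib Require Import Reals Lra Psatz List ClassicalEpsilon ProofIrrelevance FunctionalExtensionality.
Import ListNotations.
Open Scope R_scope.

Ltac kring k := destruct k; simpl in *; [ring|];
  repeat match goal with p : (R * R)%type |- _ => destruct p end; simpl; f_equal; ring.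

Lemma Kmul1r k (a : K k) : Kmul (Kone k) a = a.
Proof. kring k. Qed.

Lemma Kaddr0 k (a : K k) : Kadd a (Kzero k) = a.
Proof. kring k. Qed.

Lemma Kabs_eq0 k (a : K k) : Kabs a = 0 -> a = Kzero k.
Proof.
  destruct k; simpl in *.
  - intros H. destruct (Req_dec a 0) as [|Ha]; [assumption|].
    now apply Rabs_no_R0 in Ha.
  - destruct a as [x y]; simpl. intros H. apply sqrt_eq_0 in H; [|nra].
    f_equal; nra.
Qed.

Lemma Kadd_self_eq0 k (a : K k) : a = Kadd a a -> a = Kzero k.
Proof.
  destruct k; simpl in *; [lra|].
  destruct a; simpl; intros H; inversion H; f_equal; lra.
Qed.

Lemma Kabs_subC k (a b : K k) : Kabs (Kadd a (Kopp b)) = Kabs (Kadd b (Kopp a)).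
Proof. rewrite <- Kabs_opp. f_equal. kring k. Qed.

Lemma Kabs_sub_triangle k (a b c : K k) :
  Kabs (Kadd a (Kopp c)) <= Kabs (Kadd a (Kopp b)) + Kabs (Kadd b (Kopp c)).
Proof.
  replace (Kadd a (Kopp c)) with (Kadd (Kadd a (Kopp b)) (Kadd b (Kopp c))) by kring k.
  apply Kabs_triangle.
Qed.

Lemma Kabs_le_sub k (a b : K k) : Kabs a <= Kabs b + Kabs (Kadd a (Kopp b)).
Proof.
  replace a with (Kadd b (Kadd a (Kopp b))) at 1 by kring k. apply Kabs_triangle.
Qed.

Lemma Ksub_eq0 k (a b : K k) : Kadd a (Kopp b) = Kzero k -> a = b.
Proof.
  intros H. replace a with (Kadd (Kadd a (Kopp b)) b) by kring k.
  rewrite H. kring k.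
Qed.

Lemma Kabs_sub_affine k (a x y z p q r : K k) : p = Kadd (Kmul a q) r ->
  Kabs (Kadd x (Kopp (Kadd (Kmul a y) z))) <=
  Kabs (Kadd x (Kopp p)) + Kabs a * Kabs (Kadd y (Kopp q)) + Kabs (Kadd z (Kopp r)).
Proof.
  intros ->.
  replace (Kadd x (Kopp (Kadd (Kmul a y) z))) with
    (Kadd (Kadd (Kadd x (Kopp (Kadd (Kmul a q) r))) (Kopp (Kmul a (Kadd y (Kopp q)))))
          (Kopp (Kadd z (Kopp r)))) by kring k.
  eapply Rle_trans; [apply Kabs_triangle|]. rewrite Kabs_opp.
  apply Rplus_le_compat_r. eapply Rle_trans; [apply Kabs_triangle|].
  rewrite Kabs_opp, Kabs_mul. lra.
Qed.

Definition Kofr (k : scalar_field) (r : R) : K k :=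
  match k return K k with RealField => r | ComplexField => (r, 0) end.

Lemma Kabs_Kofr k r : Kabs (Kofr k r) = Rabs r.
Proof. destruct k; simpl; [reflexivity|]. rewrite <- sqrt_Rsqr_abs. unfold Rsqr. f_equal; ring. Qed.

Lemma Rle_of_le_eps a b : (forall d, 0 < d -> a <= b + d) -> a <= b.
Proof.
  intros H. destruct (Rle_or_lt a b) as [|Hab]; [assumption|].
  specialize (H ((a - b) / 2)). lra.
Qed.

Lemma Rsup_eq (S : R -> Prop) m : is_lub S m -> Rsup S = m.
Proof.
  intros H. unfold Rsup. apply is_lub_u with S; [|exact H].
  apply epsilon_spec. now exists m.
Qed.

Lemma Rabs_le_sqrt_sum x y : Rabs x <= sqrt (x * x + y * y).
Proof.
  rewrite <- (sqrt_Rsqr_abs x). apply sqrt_le_1_alt. unfold Rsqr.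
  unfold Rabs; destruct (Rcase_abs x); nra.
Qed.

Lemma sqrt_sum_le_Rabs x y : sqrt (x * x + y * y) <= Rabs x + Rabs y.
Proof.
  pose proof (Rabs_pos x); pose proof (Rabs_pos y).
  rewrite <- (sqrt_square (Rabs x + Rabs y)) by lra.
  apply sqrt_le_1_alt. unfold Rabs; destruct (Rcase_abs x), (Rcase_abs y); nra.
Qed.

Lemma Kspace_normed k : is_normed_space (Kspace k).
Proof.
  unfold is_normed_space; simpl.
  repeat split; intros; try solve [kring k].
  - apply Kabs_nonneg.
  - now apply Kabs_eq0.
  - apply Kabs_mul.
  - apply Kabs_triangle.
Qed.

Lemma Kspace_complete k : complete (Kspace k).
Proof.
  destruct k; intros s Hc; simpl in *.
  - destruct (R_complete s) as [l Hl].
    { intros eps He. destruct (Hc eps He) as [N HN]. exists N.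
      intros n m Hn Hm. apply HN; lia. }
    exists l. intros eps He. destruct (Hl eps He) as [N HN]. exists N.
    intros n Hn. apply HN. lia.
  - destruct (R_complete (fun n => fst (s n))) as [l1 Hl1].
    { intros eps He. destruct (Hc eps He) as [N HN]. exists N. intros n m Hn Hm.
      eapply Rle_lt_trans; [apply Rabs_le_sqrt_sum | exact (HN n m Hn Hm)]. }
    destruct (R_complete (fun n => snd (s n))) as [l2 Hl2].
    { intros eps He. destruct (Hc eps He) as [N HN]. exists N. intros n m Hn Hm.
      eapply Rle_lt_trans; [|exact (HN n m Hn Hm)].
      rewrite Rplus_comm. apply Rabs_le_sqrt_sum. }
    exists (l1, l2). intros eps He.
    destruct (Hl1 (eps / 2)) as [N1 HN1]; [lra|].
    destruct (Hl2 (eps / 2)) as [N2 HN2]; [lra|].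
    exists (Nat.max N1 N2). intros n Hn. simpl.
    eapply Rle_lt_trans; [apply sqrt_sum_le_Rabs|].
    specialize (HN1 n ltac:(lia)). specialize (HN2 n ltac:(lia)).
    unfold Rdist, Rminus in *. simpl in *. lra.
Qed.

Lemma Kspace_banach k : banach (Kspace k).
Proof. split; [apply Kspace_normed | apply Kspace_complete]. Qed.

Section NormedSpace.
Variables (k : scalar_field) (E : NSpace k).
Hypothesis HE : is_normed_space E.

Lemma vaddv0 (u : E) : vadd u (vzero E) = u.
Proof. apply HE. Qed.

Lemma vscal1 (u : E) : vscal (Kone k) u = u.
Proof. apply HE. Qed.

Lemma vnorm_ge0 (u : E) : 0 <= vnorm u.
Proof. apply HE. Qed.

Lemma vnorm_eq0 (u : E) : vnorm u = 0 -> u = vzero E.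
Proof. apply HE. Qed.

Lemma vnormZ (a : K k) (u : E) : vnorm (vscal a u) = Kabs a * vnorm u.
Proof. apply HE. Qed.

Lemma vnorm0 : vnorm (vzero E) = 0.
Proof.
  assert (H0 : vnorm (vscal (Kzero k) (vzero E)) = 0) by (rewrite vnormZ, Kabs_zero; lra).
  now rewrite <- (vnorm_eq0 _ H0).
Qed.

Lemma linear_functional0 (f : E -> K k) :
  @linear_map k E (Kspace k) f -> f (vzero E) = Kzero k.
Proof.
  intros L. apply Kadd_self_eq0.
  pose proof (L (Kone k) (vzero E) (vzero E)) as H. simpl in H.
  now rewrite vscal1, vaddv0, Kmul1r in H.
Qed.

Lemma linear_functionalZ (f : E -> K k) (a : K k) (y : E) :
  @linear_map k E (Kspace k) f -> f (vscal a y) = Kmul a (f y).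
Proof.
  intros L. pose proof (L a y (vzero E)) as H. simpl in H.
  now rewrite vaddv0, (linear_functional0 f L), Kaddr0 in H.
Qed.

End NormedSpace.

Lemma functional_eq k (E : NSpace k) (f g : functional E) :
  (forall x, proj1_sig f x = proj1_sig g x) -> f = g.
Proof.
  destruct f as [f Hf], g as [g Hg]; simpl; intros H.
  assert (f = g) as <- by (apply functional_extensionality; auto).
  f_equal. apply proof_irrelevance.
Qed.

Section Dual.
Variables (k : scalar_field) (F : NSpace k).
Hypothesis HF : is_normed_space F.

Lemma dnorm_lub (f : dual F) :
  is_lub (fun r => exists x : F, vnorm x <= 1 /\ r = Kabs (proj1_sig f x)) (vnorm f).
Proof.
  destruct f as [f [L [C B]]]. simpl.
  set (S := fun r => exists x : F, vnorm x <= 1 /\ r = Kabs (f x)).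
  assert (Hb : bound S).
  { exists (Rabs C). intros r [x [Hx ->]]. specialize (B x). simpl in B.
    pose proof (vnorm_ge0 k F HF x). pose proof (Rle_abs C). pose proof (Rabs_pos C).
    assert (C * vnorm x <= Rabs C * vnorm x) by (apply Rmult_le_compat_r; lra). nra. }
  assert (Hne : exists r, S r).
  { exists (Kabs (f (vzero F))), (vzero F). split; [|reflexivity].
    rewrite (vnorm0 k F HF). lra. }
  destruct (completeness S Hb Hne) as [m Hm].
  now rewrite (Rsup_eq S m Hm).
Qed.

Lemma dnorm_le (f : dual F) c :
  (forall x, vnorm x <= 1 -> Kabs (proj1_sig f x) <= c) -> vnorm f <= c.
Proof. intros H. apply (proj2 (dnorm_lub f)). intros r [x [Hx ->]]. auto. Qed.

Lemma dnorm_ge (f : dual F) x : vnorm x <= 1 -> Kabs (proj1_sig f x) <= vnorm f.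
Proof. intros H. apply (proj1 (dnorm_lub f)). now exists x. Qed.

Lemma dnorm_ge0 (f : dual F) : 0 <= vnorm f.
Proof.
  eapply Rle_trans; [apply Kabs_nonneg | apply (dnorm_ge f (vzero F))].
  rewrite (vnorm0 k F HF). lra.
Qed.

Lemma dual_bound (f : dual F) (y : F) : Kabs (proj1_sig f y) <= vnorm f * vnorm y.
Proof.
  pose proof (proj1 (proj2_sig f)) as L.
  pose proof (vnorm_ge0 k F HF y) as Hy0.
  destruct (Req_dec (vnorm y) 0) as [Hy|Hy].
  - apply (vnorm_eq0 k F HF) in Hy. subst y.
    rewrite (linear_functional0 k F HF _ L), Kabs_zero. pose proof (dnorm_ge0 f). nra.
  - set (r := / vnorm y).
    assert (Hr : 0 < r) by (apply Rinv_0_lt_compat; lra).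
    assert (Hfu : Kabs (proj1_sig f (vscal (Kofr k r) y)) <= vnorm f).
    { apply dnorm_ge. rewrite (vnormZ k F HF), Kabs_Kofr, Rabs_right by lra.
      unfold r. right. field. assumption. }
    rewrite (linear_functionalZ k F HF _ _ _ L), Kabs_mul, Kabs_Kofr, Rabs_right in Hfu
      by lra.
    apply (Rmult_le_compat_r (vnorm y)) in Hfu; [|lra].
    unfold r in Hfu. rewrite Rmult_comm, <- Rmult_assoc, Rinv_r in Hfu by assumption. lra.
Qed.

Lemma dual_normed : is_normed_space (dual F).
Proof.
  pose proof (Kspace_normed k) as [A1 [A2 [A3 [A4 [A5 [A6 [A7 [A8 _]]]]]]]].
  repeat split;
    try (intros; apply functional_eq; intros; simpl;
         solve [apply A1 | apply A2 | apply A3 | apply A4 | apply A5 | apply A6 | apply A7 | apply A8]).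
  - intros u. apply dnorm_ge0.
  - intros u Hu. apply functional_eq. intros x. simpl. apply Kabs_eq0.
    pose proof (dual_bound u x) as H. rewrite Hu, Rmult_0_l in H.
    pose proof (Kabs_nonneg k (proj1_sig u x)). lra.
  - intros a u. pose proof (Kabs_nonneg k a). apply Rle_antisym.
    + apply dnorm_le. intros x Hx. simpl. rewrite Kabs_mul.
      apply Rmult_le_compat_l; [assumption | now apply dnorm_ge].
    + destruct (Req_dec (Kabs a) 0) as [Ha|Ha].
      { rewrite Ha, Rmult_0_l. apply dnorm_ge0. }
      assert (Hu : vnorm u <= vnorm (vscal a u) / Kabs a).
      { apply dnorm_le. intros x Hx.
        pose proof (dnorm_ge (vscal a u) x Hx) as G. simpl in G. rewrite Kabs_mul in G.
        apply (Rmult_le_reg_l (Kabs a)); [lra|].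
        eapply Rle_trans; [exact G|]. right. simpl. field. assumption. }
      apply (Rmult_le_compat_l (Kabs a)) in Hu; [|lra].
      unfold Rdiv in Hu. rewrite (Rmult_comm (vnorm _)), <- Rmult_assoc, Rinv_r, Rmult_1_l in Hu;
        assumption.
  - intros u v. apply dnorm_le. intros x Hx.
    change (Kabs (Kadd (proj1_sig u x) (proj1_sig v x)) <= vnorm u + vnorm v).
    eapply Rle_trans; [apply Kabs_triangle|].
    pose proof (dnorm_ge u x Hx). pose proof (dnorm_ge v x Hx). lra.
Qed.

End Dual.

Definition Kconverges {k} (u : nat -> K k) (l : K k) : Prop :=
  forall eps, 0 < eps -> exists N, forall n, (N <= n)%nat -> Kabs (Kadd (u n) (Kopp l)) < eps.

Section DualComplete.
Variables (k : scalar_field) (F : NSpace k).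
Hypothesis HF : is_normed_space F.
Variable s : nat -> dual F.
Hypothesis Hcauchy : forall eps, 0 < eps -> exists N, forall m n, (N <= m)%nat -> (N <= n)%nat ->
  vnorm (vsub (s m) (s n)) < eps.

Lemma dual_cauchy_pointwise (y : F) : exists l, Kconverges (fun n => proj1_sig (s n) y) l.
Proof.
  apply (Kspace_complete k (fun n => proj1_sig (s n) y)).
  intros eps He. pose proof (vnorm_ge0 k F HF y).
  destruct (Hcauchy (eps / (vnorm y + 1))) as [N HN]; [apply Rdiv_lt_0_compat; lra|].
  exists N. intros m n Hm Hn. specialize (HN m n Hm Hn).
  pose proof (dual_bound k F HF (vsub (s m) (s n)) y) as B.
  change (Kabs (Kadd (proj1_sig (s m) y) (Kopp (proj1_sig (s n) y))) < eps).
  change (Kabs (Kadd (proj1_sig (s m) y) (Kopp (proj1_sig (s n) y)))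
          <= vnorm (vsub (s m) (s n)) * vnorm y) in B.
  assert (eps / (vnorm y + 1) * vnorm y < eps).
  { apply (Rmult_lt_reg_r (vnorm y + 1)); [lra|].
    replace (eps / (vnorm y + 1) * vnorm y * (vnorm y + 1)) with (eps * vnorm y)
      by (field; lra). nra. }
  pose proof (dnorm_ge0 k F HF (vsub (s m) (s n))). nra.
Qed.

Definition dual_limit (y : F) : K k :=
  epsilon (inhabits (Kzero k)) (Kconverges (fun n => proj1_sig (s n) y)).

Lemma dual_limitP (y : F) : Kconverges (fun n => proj1_sig (s n) y) (dual_limit y).
Proof. unfold dual_limit. apply epsilon_spec, dual_cauchy_pointwise. Qed.

Lemma dual_limit_uniform eps : 0 < eps -> exists N, forall n, (N <= n)%nat -> forall w,
  Kabs (Kadd (proj1_sig (s n) w) (Kopp (dual_limit w))) <= eps * vnorm w.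
Proof.
  intros He. destruct (Hcauchy eps He) as [N HN]. exists N. intros n Hn w.
  apply Rle_of_le_eps. intros d Hd. destruct (dual_limitP w d Hd) as [N2 HN2].
  set (m := Nat.max N N2).
  eapply Rle_trans; [apply (Kabs_sub_triangle k _ (proj1_sig (s m) w))|].
  pose proof (HN2 m ltac:(unfold m; lia)).
  pose proof (HN n m Hn ltac:(unfold m; lia)).
  pose proof (dual_bound k F HF (vsub (s n) (s m)) w) as B.
  change (Kabs (Kadd (proj1_sig (s n) w) (Kopp (proj1_sig (s m) w)))
          <= vnorm (vsub (s n) (s m)) * vnorm w) in B.
  pose proof (vnorm_ge0 k F HF w).
  assert (vnorm (vsub (s n) (s m)) * vnorm w <= eps * vnorm w)
    by (apply Rmult_le_compat_r; lra).
  lra.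
Qed.

Lemma dual_limit_linear : @linear_map k F (Kspace k) dual_limit.
Proof.
  intros a u v. simpl. apply Ksub_eq0, Kabs_eq0, Rle_antisym; [|apply Kabs_nonneg].
  set (C := vnorm (vadd (vscal a u) v) + Kabs a * vnorm u + vnorm v).
  pose proof (vnorm_ge0 k F HF (vadd (vscal a u) v)).
  pose proof (vnorm_ge0 k F HF u). pose proof (vnorm_ge0 k F HF v).
  pose proof (Kabs_nonneg k a).
  assert (0 <= C) by (unfold C; nra).
  apply Rle_of_le_eps. intros d Hd. rewrite Rplus_0_l.
  destruct (dual_limit_uniform (d / (C + 1))) as [N HN]; [apply Rdiv_lt_0_compat; lra|].
  eapply Rle_trans.
  { apply (Kabs_sub_affine k a _ _ _ (proj1_sig (s N) (vadd (vscal a u) v))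
             (proj1_sig (s N) u) (proj1_sig (s N) v)).
    apply (proj1 (proj2_sig (s N))). }
  rewrite !(Kabs_subC k (dual_limit _)).
  pose proof (HN N (le_n _) (vadd (vscal a u) v)).
  pose proof (HN N (le_n _) u). pose proof (HN N (le_n _) v).
  assert (Kabs a * Kabs (Kadd (proj1_sig (s N) u) (Kopp (dual_limit u)))
          <= Kabs a * (d / (C + 1) * vnorm u)) by (apply Rmult_le_compat_l; auto).
  assert (d / (C + 1) * C <= d).
  { apply (Rmult_le_reg_r (C + 1)); [lra|].
    replace (d / (C + 1) * C * (C + 1)) with (d * C) by (field; lra). nra. }
  unfold C in *. nra.
Qed.

Lemma dual_limit_bounded : @bounded_map k F (Kspace k) dual_limit.
Proof.
  destruct (dual_limit_uniform 1 Rlt_0_1) as [N HN].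
  exists (vnorm (s N) + 1). intros w.
  change (Kabs (dual_limit w) <= (vnorm (s N) + 1) * vnorm w).
  eapply Rle_trans; [apply (Kabs_le_sub k _ (proj1_sig (s N) w))|].
  rewrite Kabs_subC. pose proof (HN N (le_n _) w).
  pose proof (dual_bound k F HF (s N) w). lra.
Qed.

Lemma dual_cauchy_converges : exists l : dual F, forall eps, 0 < eps ->
  exists N, forall n, (N <= n)%nat -> vnorm (vsub (s n) l) < eps.
Proof.
  exists (exist _ dual_limit (conj dual_limit_linear dual_limit_bounded)).
  intros eps He.
  destruct (dual_limit_uniform (eps / 2)) as [N HN]; [lra|]. exists N. intros n Hn.
  apply Rle_lt_trans with (eps / 2); [|lra].
  apply (dnorm_le k F HF). intros x Hx.
  change (Kabs (Kadd (proj1_sig (s n) x) (Kopp (dual_limit x))) <= eps / 2).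
  pose proof (HN n Hn x). pose proof (vnorm_ge0 k F HF x).
  assert (eps / 2 * vnorm x <= eps / 2 * 1) by (apply Rmult_le_compat_l; lra). lra.
Qed.

End DualComplete.

Lemma dual_banach k (F : NSpace k) : is_normed_space F -> banach (dual F).
Proof.
  intros HF. split; [now apply dual_normed|].
  intros s Hc. now apply dual_cauchy_converges.
Qed.

Fixpoint happend {k} (Es Gs : list (NSpace k)) : htuple Es -> htuple Gs -> htuple (Es ++ Gs) :=
  match Es return htuple Es -> htuple Gs -> htuple (Es ++ Gs) with
  | nil => fun _ y => y
  | E :: Es' => fun x y => (fst x, happend Es' Gs (snd x) y)
  end.

Lemma hsplit_happend k (Es Gs : list (NSpace k)) x y :
  hsplit Es Gs (happend Es Gs x y) = (x, y).
Proof.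
  induction Es as [|E Es IH]; simpl.
  - now destruct x.
  - destruct x as [x1 x2]; simpl. now rewrite IH.
Qed.

Lemma hnorm_prod_app k (Es Gs : list (NSpace k)) z :
  hnorm_prod (Es ++ Gs) z =
  hnorm_prod Es (fst (hsplit Es Gs z)) * hnorm_prod Gs (snd (hsplit Es Gs z)).
Proof.
  induction Es as [|E Es IH]; simpl.
  - ring.
  - destruct z as [z1 z2]; simpl. rewrite IH. ring.
Qed.

Fixpoint idmaps {k} (Es : list (NSpace k)) : hmaps Es Es :=
  match Es return hmaps Es Es with
  | nil => tt
  | E :: Es' => (fun x => x, idmaps Es')
  end.

Lemma happly_idmaps k (Es : list (NSpace k)) z : happly Es Es (idmaps Es) z = z.
Proof. induction Es as [|E Es IH]; simpl; destruct z; [reflexivity|]. now rewrite IH. Qed.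

Lemma hmaps_ok_idmaps k (Es : list (NSpace k)) : hmaps_ok Es Es (idmaps Es).
Proof.
  induction Es as [|E Es IH]; simpl; [exact I|].
  split; [split|exact IH].
  - intros a u v. reflexivity.
  - exists 1. intros x. lra.
Qed.

Lemma tsum_map k (Es Gs : list (NSpace k)) (B : htuple Gs -> K k)
    (f : htuple Es -> htuple Gs) u :
  tsum B (map f u) = tsum (fun z => B (f z)) u.
Proof. induction u as [|z u IH]; simpl; [reflexivity|]. now rewrite IH. Qed.

Lemma tsum_ext k (Es : list (NSpace k)) (B B' : htuple Es -> K k) u :
  (forall z, B z = B' z) -> tsum B u = tsum B' u.
Proof. intros H. induction u as [|z u IH]; simpl; [reflexivity|]. now rewrite H, IH. Qed.

Lemma phiT_multilinear k (Es : list (NSpace k)) (F : NSpace k) (T : htuple Es -> dual F) :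
  multilinear Es (dual F) T -> multilinear (Es ++ [F]) (Kspace k) (phiT Es F T).
Proof.
  revert T; induction Es as [|E Es IH]; intros T HT; simpl.
  - split; [|trivial]. intros t. exact (proj1 (proj2_sig (T tt))).
  - split.
    + intros t a u v. unfold phiT; simpl.
      exact (f_equal (fun g : functional F => proj1_sig g (fst (snd (hsplit Es [F] t))))
               (proj1 HT (fst (hsplit Es [F] t)) a u v)).
    + intros x. exact (IH (fun t => T (x, t)) (proj2 HT x)).
Qed.

Lemma phiT_bounded k (Es : list (NSpace k)) (F : NSpace k) (T : htuple Es -> dual F) :
  is_normed_space F -> bounded_ml Es (dual F) T ->
  bounded_ml (Es ++ [F]) (Kspace k) (phiT Es F T).
Proof.
  intros HF [C HC]. exists C. intros z. rewrite hnorm_prod_app. unfold phiT. simpl.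
  destruct (hsplit Es [F] z) as [x [y u]]. simpl.
  pose proof (vnorm_ge0 k F HF y).
  eapply Rle_trans; [apply (dual_bound k F HF)|].
  rewrite Rmult_1_r, <- Rmult_assoc. apply Rmult_le_compat_r; auto.
Qed.

Lemma phiT_inj k (Es : list (NSpace k)) (F : NSpace k) (T T' : htuple Es -> dual F) :
  (forall z, phiT Es F T z = phiT Es F T' z) -> T = T'.
Proof.
  intros H. apply functional_extensionality. intros x. apply functional_eq. intros y.
  specialize (H (happend Es [F] x (y, tt))). unfold phiT in H.
  now rewrite hsplit_happend in H.
Qed.

Lemma Kmul_functional k (c : K k) : @is_functional k (Kspace k) (fun x => Kmul x c).
Proof.
  split.
  - intros a u v. simpl. kring k.
  - exists (Kabs c). intros x. simpl. rewrite Kabs_mul. lra.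
Qed.

(* [Kembed c] is [lambda |-> lambda c]: the canonical isometry of K onto its dual. *)
Definition Kembed {k} (c : K k) : dual (Kspace k) := exist _ _ (Kmul_functional k c).

Lemma Kembed_linear k : @linear_map k (Kspace k) (dual (Kspace k)) Kembed.
Proof. intros a u v. apply functional_eq. intros x. simpl. kring k. Qed.

Lemma Kembed_bounded k : @bounded_map k (Kspace k) (dual (Kspace k)) Kembed.
Proof.
  exists 1. intros c. apply (dnorm_le k _ (Kspace_normed k)). intros x Hx.
  simpl in *. rewrite Kabs_mul. pose proof (Kabs_nonneg k c). nra.
Qed.

Section Representation.
Variables (k : scalar_field) (M : multi_ideal k) (beta : tnorm_family k).
Hypothesis HM : is_multi_ideal M.
Hypothesis Hsmooth : smooth beta.
Hypothesis Hrep : represents M beta.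

Lemma smooth_beta_bounded (Gs : list (NSpace k)) (A : htuple Gs -> K k)
    (B : htuple (Gs ++ [Kspace k]) -> K k) :
  Gs <> nil -> all_normed Gs ->
  (forall z, B (happend Gs [Kspace k] z (Kone k, tt)) = A z) ->
  beta_bounded beta (Gs ++ [Kspace k]) B -> beta_bounded beta Gs A.
Proof.
  intros Hn HGs HBA [C HC]. exists C. intros u.
  set (lift := fun z => happend Gs [Kspace k] z (Kone k, tt)).
  replace (beta Gs u) with (beta (Gs ++ [Kspace k]) (map lift u)).
  - rewrite <- (tsum_ext k Gs _ _ u (fun z => HBA z)), <- tsum_map. apply HC.
  - symmetry. apply Hsmooth; [assumption | assumption |].
    intros B' _. rewrite tsum_map. apply tsum_ext. intros z.
    unfold lift. rewrite hsplit_happend. simpl. now rewrite Kmul1r.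
Qed.

(* The ideal property moves [A] into M(Gs; K'), where representability applies;
   smoothness then strips the extra scalar factor. *)
Lemma ideal_form_beta_bounded (Gs : list (NSpace k)) (A : htuple Gs -> K k) :
  Gs <> nil -> all_banach Gs -> mi_mem M Gs (Kspace k) A -> beta_bounded beta Gs A.
Proof.
  intros Hn HGs HA.
  assert (HGn : all_normed Gs) by (eapply Forall_impl; [|exact HGs]; intros E HE; apply HE).
  set (T := fun x => Kembed (A (happly Gs Gs (idmaps Gs) x))).
  assert (HT : mi_mem M Gs (dual (Kspace k)) T).
  { apply (proj1 (proj2 HM) Gs Gs (Kspace k) (dual (Kspace k)) (idmaps Gs) Kembed A);
      auto using Kspace_banach, dual_banach, Kspace_normed, hmaps_ok_idmaps,
                 Kembed_linear, Kembed_bounded. }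
  apply (smooth_beta_bounded Gs A (phiT Gs (Kspace k) T) Hn HGn).
  - intros z. unfold phiT, T. rewrite hsplit_happend, happly_idmaps. apply Kmul1r.
  - exact (proj1 (proj1 (Hrep Gs (Kspace k) Hn HGs (Kspace_banach k)) T HT)).
Qed.

Lemma represented_mem (Es : list (NSpace k)) (F : NSpace k) (T : htuple Es -> dual F) :
  Es <> nil -> all_banach Es -> banach F ->
  multilinear Es (dual F) T -> beta_bounded beta (Es ++ [F]) (phiT Es F T) ->
  mi_mem M Es (dual F) T.
Proof.
  intros Hn HEs HF HT Hb.
  destruct (proj2 (Hrep Es F Hn HEs HF) (phiT Es F T) (phiT_multilinear k Es F T HT) Hb)
    as [T' [HT' Heq]].
  now rewrite <- (phiT_inj k Es F T' T Heq).
Qed.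

End Representation.

Theorem proposition2p8 (k : scalar_field) (M : multi_ideal k) (HM : is_multi_ideal M)
  (Es : list (NSpace k)) (F : NSpace k)
  (Hn : Es <> nil) (HEs : all_banach Es) (HF : banach F)
  (H1 : forall A : htuple (Es ++ [F]) -> Kspace k,
          mi_mem M (Es ++ [F]) (Kspace k) A <-> cont_multilinear (Es ++ [F]) (Kspace k) A)
  (H2 : ~ (forall T : htuple Es -> dual F,
             mi_mem M Es (dual F) T <-> cont_multilinear Es (dual F) T)) :
  ~ (exists beta : tnorm_family k, is_tensor_norm beta /\ smooth beta /\ represents M beta).
Proof.
  intros [beta [_ [Hsmooth Hrep]]].
  assert (HEF : all_banach (Es ++ [F])) by (apply Forall_app; auto).
  assert (HEFn : Es ++ [F] <> nil) by (destruct Es; discriminate).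
  apply H2. intros T. split.
  - apply (proj1 HM Es (dual F) Hn HEs (dual_banach k F (proj1 HF))).
  - intros [Tml Tbd].
    apply (represented_mem k M beta Hrep); auto.
    apply (ideal_form_beta_bounded k M beta HM Hsmooth Hrep); auto.
    apply H1. split.
    + now apply phiT_multilinear.
    + now apply phiT_bounded; [apply HF|].
Qed.
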